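(* Let $m_1,r\ge1$ be integers, $p\in[1,\infty)$, $q\in[1,\infty]$, $c_o>0$, and let $g:\mathbb{R}^{m_1}\to\mathbb{R}$, $g(x)=\sum_{i=1}^r c_i\,\sigma(w_i^Tx+b_i)$, where $c_i,b_i\in\mathbb{R}$, $w_i\in\mathbb{R}^{m_1}$, $\sum_{i=1}^r|c_i|\le c_o$ and $\|(b_i,w_i^T)\|_1=1$ for each $i$. Then for every integer $k\in[1,r]$, $$g\in\mathcal{N}^{k,\mathbf d^k}_{p,q,\,wid_k^{1/q},\,2c_o},$$ where $wid_k=\lceil r/k\rceil+2m_1+3$ and $\mathbf d^k=(m_1,wid_k,\dots,wid_k,1)$ (with $d^k_0=m_1$, $d^k_i=wid_k$ for $i=1,\dots,k$, $d^k_{k+1}=1$).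
   Context: $\sigma(u)=\max(u,0)$, applied coordinatewise; $wid_k^{1/\infty}=1$. For a real $s_1\times s_2$ matrix $A=(a_{ij})$: $\|A\|_{p,q}=\big(\sum_{j=1}^{s_2}(\sum_{i=1}^{s_1}|a_{ij}|^p)^{q/p}\big)^{1/q}$ for $q<\infty$, $\|A\|_{p,\infty}=\max_j(\sum_{i}|a_{ij}|^p)^{1/p}$. An affine map $T:\mathbb{R}^{a}\to\mathbb{R}^{b}$, $T(u)=W^Tu+B$, is identified with $\tilde V\in\mathbb{R}^{(a+1)\times b}$ whose first row is $B^T$ and remaining rows form $W$; $\|T\|_{p,q}:=\|\tilde V\|_{p,q}$. For $k\ge0$, width vector $\mathbf d=(d_0,\dots,d_{k+1})$ and $c,c_o>0$, $\mathcal{N}^{k,\mathbf d}_{p,q,c,c_o}$ is the set of all $f=T_{k+1}\circ\sigma\circ T_k\circ\cdots\circ\sigma\circ T_1:\mathbb{R}^{d_0}\to\mathbb{R}^{d_{k+1}}$ with affine $T_i:\mathbb{R}^{d_{i-1}}\to\mathbb{R}^{d_i}$, $\|T_i\|_{p,q}=c$ for $i\le k$ and $\|T_{k+1}\|_{p,q}\le c_o$. *)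

From Stdlib Require Import Reals Lra Lia.
Open Scope R_scope.

(* Vectors in R^n are functions nat -> R (only coordinates < n matter);
   matrices in R^{s1 x s2} are functions nat -> nat -> R (entries (i,j), i<s1, j<s2). *)

Fixpoint rsum (n : nat) (f : nat -> R) : R :=
  match n with O => 0 | S n' => rsum n' f + f n' end.

(* max_{i<n} f i  (0 for n = 0; used only on nonnegative quantities) *)
Fixpoint rmax (n : nat) (f : nat -> R) : R :=
  match n with O => 0 | S n' => Rmax (rmax n' f) (f n') end.

(* x^y for x >= 0 and y > 0, with the convention 0^y = 0 *)
Definition ppow (x y : R) : R :=
  if Req_EM_T x 0 then 0 else Rpower x y.

Inductive extR := Fin (r : R) | Inf.

Definition colnorm (p : R) (s1 : nat) (A : nat -> nat -> R) (j : nat) : R :=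
  ppow (rsum s1 (fun i => ppow (Rabs (A i j)) p)) (1 / p).

Definition mnorm (p : R) (q : extR) (s1 s2 : nat) (A : nat -> nat -> R) : R :=
  match q with
  | Fin q' => ppow (rsum s2 (fun j =>
                 ppow (rsum s1 (fun i => ppow (Rabs (A i j)) p)) (q' / p))) (1 / q')
  | Inf => rmax s2 (colnorm p s1 A)
  end.

Definition relu (u : R) : R := Rmax u 0.

(* Affine map R^a -> R^b encoded by an (a+1) x b matrix V:
   row 0 is the bias B^T, rows 1..a form W; T(u) = W^T u + B. *)
Definition affine (a : nat) (V : nat -> nat -> R) (u : nat -> R) : nat -> R :=
  fun j => V 0%nat j + rsum a (fun i => V (S i) j * u i).

Definition affnorm (p : R) (q : extR) (a b : nat) (V : nat -> nat -> R) : R :=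
  mnorm p q (S a) b V.

Fixpoint hidden (d : nat -> nat) (Ts : nat -> nat -> nat -> R) (i : nat)
    (x : nat -> R) : nat -> R :=
  match i with
  | O => x
  | S i' => fun j => relu (affine (d i') (Ts (S i')) (hidden d Ts i' x) j)
  end.

Definition realize (k : nat) (d : nat -> nat) (Ts : nat -> nat -> nat -> R)
    (x : nat -> R) : nat -> R :=
  affine (d k) (Ts (S k)) (hidden d Ts k x).

Definition NN (k : nat) (d : nat -> nat) (p : R) (q : extR) (c co : R)
    (f : (nat -> R) -> (nat -> R)) : Prop :=
  exists Ts : nat -> nat -> nat -> R,
    (forall i, (1 <= i <= k)%nat -> affnorm p q (d (i - 1)%nat) (d i) (Ts i) = c) /\
    affnorm p q (d k) (d (S k)) (Ts (S k)) <= co /\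
    (forall x j, (j < d (S k))%nat -> f x j = realize k d Ts x j).

(* wid_k = ceil(r/k) + 2 m1 + 3 *)
Definition wid (r k m1 : nat) : nat := ((r + k - 1) / k + 2 * m1 + 3)%nat.

Definition wid_root (w : nat) (q : extR) : R :=
  match q with Fin q' => Rpower (INR w) (1 / q') | Inf => 1 end.

Definition dk (k m1 w : nat) : nat -> nat :=
  fun i => if Nat.eqb i 0 then m1 else if Nat.leb i k then w else 1%nat.

Definition q_ok (q : extR) : Prop :=
  match q with Fin q' => 1 <= q' | Inf => True end.

Arguments dk (k m1 w)%_nat_scope _%_nat_scope.
Arguments wid (r k m1)%_nat_scope.
Arguments wid_root w%_nat_scope q.

From Stdlib Require Import Reals Lra Lia.
Open Scope R_scope.

(* Split the neurons into k groups of G = ceil(r/k) and let hidden layer s compute group s.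
   Besides these G units, every hidden layer carries relu(x) and relu(-x), from which later layers
   recompute any affine function of x with halved weights (keeping each column of l^1-norm <= 1);
   two accumulators holding weighted averages of the positive and negative parts of
   sum_i c_i relu(g_i x) over the groups seen so far; and a unit that is identically 0.
   As l^1 <= 1 implies l^p <= 1, the outgoing weights of the zero unit top up every column to
   l^p-norm exactly 1, so each hidden layer has norm wid^(1/q).  The output layer recombines the
   last group with the accumulators, with l^1-norm sum_i |c_i| scale_i <= 2 c_o. *)

Ltac case_nat := repeat match goal with
  | |- context [Nat.ltb ?a ?b] => destruct (Nat.ltb_spec a b); try lia
  | |- context [Nat.eqb ?a ?b] => destruct (Nat.eqb_spec a b); try lia
  | |- context [Nat.leb ?a ?b] => destruct (Nat.leb_spec a b); try lia
  end.

Lemma rsum_ext n f g : (forall i, (i < n)%nat -> f i = g i) -> rsum n f = rsum n g.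
Proof.
  induction n as [|n IH]; intros E; simpl; [reflexivity|].
  rewrite IH, E by (intros; try apply E; lia); reflexivity.
Qed.

Lemma rsum_plus n f g : rsum n (fun i => f i + g i) = rsum n f + rsum n g.
Proof. induction n as [|n IH]; simpl; [lra|]. rewrite IH; lra. Qed.

Lemma rsum_minus n f g : rsum n (fun i => f i - g i) = rsum n f - rsum n g.
Proof. induction n as [|n IH]; simpl; [lra|]. rewrite IH; lra. Qed.

Lemma rsum_scal n a f : rsum n (fun i => a * f i) = a * rsum n f.
Proof. induction n as [|n IH]; simpl; [lra|]. rewrite IH; lra. Qed.

Lemma rsum_const n a : rsum n (fun _ => a) = INR n * a.
Proof. induction n as [|n IH]; [simpl; lra|]. rewrite S_INR; simpl; rewrite IH; lra. Qed.

Lemma rsum_split m n f : rsum (m + n) f = rsum m f + rsum n (fun i => f (m + i)%nat).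
Proof.
  induction n as [|n IH]; simpl; [rewrite Nat.add_0_r; lra|].
  rewrite Nat.add_succ_r; simpl; rewrite IH; lra.
Qed.

Lemma rsum_shift n f : rsum (S n) f = f 0%nat + rsum n (fun i => f (S i)).
Proof. rewrite <- Nat.add_1_l, rsum_split; simpl; lra. Qed.

Lemma rsum_eq0 n f : (forall i, (i < n)%nat -> f i = 0) -> rsum n f = 0.
Proof. intros E; rewrite (rsum_ext n f (fun _ => 0)), rsum_const by auto; lra. Qed.

Lemma rsum_le n f g : (forall i, (i < n)%nat -> f i <= g i) -> rsum n f <= rsum n g.
Proof.
  induction n as [|n IH]; intros H; simpl; [lra|].
  pose proof (H n (Nat.lt_succ_diag_r n)); pose proof (IH ltac:(intros; apply H; lia)); lra.
Qed.

Lemma rsum_nonneg n f : (forall i, (i < n)%nat -> 0 <= f i) -> 0 <= rsum n f.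
Proof. intros H; rewrite <- (rsum_eq0 n (fun _ => 0)) by auto; apply rsum_le, H. Qed.

Lemma rsum_update n z f g : (z < n)%nat -> (forall i, (i < n)%nat -> i <> z -> f i = g i) ->
  rsum n f = rsum n g - g z + f z.
Proof.
  intros Hz E; replace n with (z + (1 + (n - z - 1)))%nat by lia.
  rewrite !rsum_split; simpl; rewrite !Nat.add_0_r.
  rewrite (rsum_ext z f g) by (intros; apply E; lia).
  rewrite (rsum_ext _ (fun i => f (z + S i)%nat) (fun i => g (z + S i)%nat)) by (intros; apply E; lia).
  lra.
Qed.

Lemma rsum_term_le n f z : (forall i, (i < n)%nat -> 0 <= f i) -> (z < n)%nat -> f z <= rsum n f.
Proof.
  intros H Hz; rewrite (rsum_update n z f (fun i => if (i =? z)%nat then 0 else f i))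
    by (auto; intros; case_nat; reflexivity).
  case_nat; enough (0 <= rsum n (fun i => if (i =? z)%nat then 0 else f i)) by lra.
  apply rsum_nonneg; intros; case_nat; auto; lra.
Qed.

Lemma rsum_eq0_term n f z : (forall i, (i < n)%nat -> 0 <= f i) -> rsum n f = 0 ->
  (z < n)%nat -> f z = 0.
Proof. intros H E Hz; pose proof (rsum_term_le n f z H Hz); pose proof (H z Hz); lra. Qed.

Lemma rsum_pad_zero n r f : (r <= n)%nat -> rsum n (fun i => if (i <? r)%nat then f i else 0) = rsum r f.
Proof.
  intros H; replace n with (r + (n - r))%nat by lia; rewrite rsum_split.
  rewrite (rsum_eq0 (n - r)) by (intros; case_nat; reflexivity); rewrite Rplus_0_r.
  apply rsum_ext; intros; case_nat; reflexivity.
Qed.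

Definition delta (i l : nat) : R := if (i =? l)%nat then 1 else 0.

Lemma rsum_delta n l f : (l < n)%nat -> rsum n (fun i => delta i l * f i) = f l.
Proof.
  intros Hl; rewrite (rsum_update n l _ (fun _ => 0)) by (auto; intros; unfold delta; case_nat; lra).
  rewrite rsum_eq0 by auto; unfold delta; case_nat; lra.
Qed.

Lemma rsum_delta_1 n l : (l < n)%nat -> rsum n (fun i => delta i l) = 1.
Proof. intros Hl; rewrite <- (rsum_delta n l (fun _ => 1)) by auto; apply rsum_ext; intros; ring. Qed.

Lemma rsum_0_mul n f : rsum n (fun i => 0 * f i) = 0.
Proof. apply rsum_eq0; intros; ring. Qed.

Lemma rsum_0 n : rsum n (fun _ => 0) = 0.
Proof. apply rsum_eq0; reflexivity. Qed.

Lemma ppow_nonneg x y : 0 <= ppow x y.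
Proof. unfold ppow; destruct (Req_EM_T x 0); [lra|left; apply exp_pos]. Qed.

Lemma ppow_0 y : ppow 0 y = 0.
Proof. unfold ppow; destruct (Req_EM_T 0 0); [reflexivity|congruence]. Qed.

Lemma ppow_Rpower x y : 0 < x -> ppow x y = Rpower x y.
Proof. intros; unfold ppow; destruct (Req_EM_T x 0); [lra|reflexivity]. Qed.

Lemma ppow_1 y : ppow 1 y = 1.
Proof. rewrite ppow_Rpower by lra; unfold Rpower; rewrite ln_1, Rmult_0_r; apply exp_0. Qed.

Lemma ppow_gt0 x y : 0 < x -> 0 < ppow x y.
Proof. intros; rewrite ppow_Rpower by auto; apply exp_pos. Qed.

Lemma ppow_ppow x y z : ppow (ppow x y) z = ppow x (y * z).
Proof.
  destruct (Req_EM_T x 0) as [->|Hx]; [rewrite !ppow_0; reflexivity|].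
  unfold ppow at 2 3; destruct (Req_EM_T x 0); [contradiction|].
  rewrite ppow_Rpower by apply exp_pos; apply Rpower_mult.
Qed.

Lemma ppow_exp1 x : 0 <= x -> ppow x 1 = x.
Proof. intros; unfold ppow; destruct (Req_EM_T x 0); [lra|apply Rpower_1; lra]. Qed.

Lemma ppow_root x p : 0 <= x -> p <> 0 -> ppow (ppow x (1 / p)) p = x.
Proof.
  intros; rewrite ppow_ppow; replace (1 / p * p) with 1 by (field; auto); apply ppow_exp1; auto.
Qed.

Lemma ppow_le x y z : 0 <= z -> 0 <= x <= y -> ppow x z <= ppow y z.
Proof.
  intros Hz Hxy; destruct (Req_EM_T x 0) as [->|Hx]; [rewrite ppow_0; apply ppow_nonneg|].
  rewrite !ppow_Rpower by lra; apply Rle_Rpower_l; lra.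
Qed.

Lemma ppow_le_self x p : 1 <= p -> 0 <= x <= 1 -> ppow x p <= x.
Proof.
  intros Hp Hx; destruct (Req_EM_T x 0) as [->|Hx0]; [rewrite ppow_0; lra|].
  assert (Hle : ppow x (p - 1) <= ppow 1 (p - 1)) by (apply ppow_le; lra).
  rewrite ppow_1 in Hle.
  rewrite !ppow_Rpower in * by lra.
  replace p with ((p - 1) + 1) by lra; rewrite Rpower_plus, Rpower_1 by lra.
  pose proof (exp_pos ((p - 1) * ln x)); unfold Rpower in *; nra.
Qed.

Lemma ppow_div x L y : 0 <= x -> 0 < L -> ppow (x / L) y = ppow x y / ppow L y.
Proof.
  intros Hx HL; rewrite (ppow_Rpower L) by auto.
  destruct (Req_EM_T x 0) as [->|Hx0]; [unfold Rdiv; rewrite Rmult_0_l, ppow_0; lra|].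
  assert (0 < / L) by (apply Rinv_0_lt_compat; lra).
  rewrite !ppow_Rpower by (try apply Rdiv_lt_0_compat; lra); unfold Rdiv.
  rewrite <- Rpower_mult_distr by lra; f_equal.
  unfold Rpower; rewrite ln_Rinv, <- exp_Ropp by lra; f_equal; ring.
Qed.

Lemma Rabs_ppow x y : Rabs (ppow x y) = ppow x y.
Proof. apply Rabs_right, Rle_ge, ppow_nonneg. Qed.

Lemma ppow_delta i l y : ppow (Rabs (delta i l)) y = delta i l.
Proof. unfold delta; case_nat; [rewrite Rabs_R1; apply ppow_1|rewrite Rabs_R0; apply ppow_0]. Qed.

Lemma Rabs_delta i l : Rabs (delta i l) = delta i l.
Proof. unfold delta; case_nat; [apply Rabs_R1|apply Rabs_R0]. Qed.

(** * Comparing the [l^p] and [l^1] norms *)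

Lemma Rdiv_nonneg x y : 0 <= x -> 0 <= y -> 0 <= x / y.
Proof.
  intros Hx [Hy| <-]; [apply Rmult_le_pos; [|left; apply Rinv_0_lt_compat]; auto|].
  unfold Rdiv; rewrite Rinv_0; lra.
Qed.

Lemma Rdiv_diag_le_1 x : x / x <= 1.
Proof.
  destruct (Req_EM_T x 0) as [->|Hx]; [unfold Rdiv; rewrite Rinv_0; lra|].
  unfold Rdiv; rewrite Rinv_r; lra.
Qed.

Lemma Rabs_m1 : Rabs (-1) = 1.
Proof. rewrite Rabs_left; lra. Qed.

Lemma Rabs_div_pos x L : 0 < L -> Rabs (x / L) = Rabs x / L.
Proof. intros; unfold Rdiv; rewrite Rabs_mult, Rabs_inv, (Rabs_right L) by lra; reflexivity. Qed.

Lemma lp_sum_le_1 n v p : 1 <= p -> rsum n (fun i => Rabs (v i)) <= 1 ->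
  rsum n (fun i => ppow (Rabs (v i)) p) <= 1.
Proof.
  intros Hp H; eapply Rle_trans; [|exact H]; apply rsum_le; intros i Hi.
  apply ppow_le_self; auto; split; [apply Rabs_pos|].
  eapply Rle_trans; [|exact H]; apply (rsum_term_le n (fun i => Rabs (v i))); auto.
  intros; apply Rabs_pos.
Qed.

Lemma lp_sum_pos n v p : 0 < rsum n (fun i => Rabs (v i)) -> 0 < rsum n (fun i => ppow (Rabs (v i)) p).
Proof.
  induction n as [|n IH]; simpl; intros H; [lra|].
  assert (0 <= rsum n (fun i => ppow (Rabs (v i)) p)) by (apply rsum_nonneg; intros; apply ppow_nonneg).
  destruct (Rlt_dec 0 (rsum n (fun i => Rabs (v i)))) as [Hpos|Hnpos].
  - pose proof (IH Hpos); pose proof (ppow_nonneg (Rabs (v n)) p); lra.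
  - assert (0 < Rabs (v n)) by lra; pose proof (ppow_gt0 (Rabs (v n)) p H1); lra.
Qed.

Lemma rsum_pow_div n v L p : 0 < L ->
  rsum n (fun i => ppow (Rabs (v i / L)) p) = rsum n (fun i => ppow (Rabs (v i)) p) / ppow L p.
Proof.
  intros HL; unfold Rdiv at 2; rewrite Rmult_comm, <- rsum_scal; apply rsum_ext; intros i _.
  rewrite Rabs_div_pos, ppow_div by (try apply Rabs_pos; lra); unfold Rdiv; ring.
Qed.

(* Rescale by [L] to reduce to [lp_sum_le_1]. *)
Lemma lp_norm_le_l1 n v p L : 1 <= p -> 0 < L -> rsum n (fun i => Rabs (v i)) <= L ->
  ppow (rsum n (fun i => ppow (Rabs (v i)) p)) (1 / p) <= L.
Proof.
  intros Hp HL H.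
  assert (HpL : 0 < ppow L p) by (apply ppow_gt0; lra).
  assert (Hs : rsum n (fun i => ppow (Rabs (v i / L)) p) <= 1).
  { apply lp_sum_le_1; auto.
    rewrite (rsum_ext n _ (fun i => / L * Rabs (v i))), rsum_scal.
    - apply (Rmult_le_reg_l L); auto; rewrite <- Rmult_assoc, Rinv_r; lra.
    - intros; rewrite Rabs_div_pos by auto; unfold Rdiv; ring. }
  rewrite rsum_pow_div in Hs by auto.
  apply Rle_trans with (ppow (ppow L p) (1 / p)).
  - apply ppow_le; [left; apply Rdiv_lt_0_compat; lra|split].
    + apply rsum_nonneg; intros; apply ppow_nonneg.
    + apply (Rmult_le_reg_r (/ ppow L p)); [apply Rinv_0_lt_compat; auto|].
      rewrite Rinv_r; lra.
  - rewrite ppow_ppow; replace (p * (1 / p)) with 1 by (field; lra); rewrite ppow_exp1; lra.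
Qed.

Lemma relu_nonneg y : 0 <= relu y.
Proof. apply Rmax_r. Qed.

Lemma relu_id y : 0 <= y -> relu y = y.
Proof. intros; apply Rmax_left; lra. Qed.

Lemma relu_neg y : y <= 0 -> relu y = 0.
Proof. intros; apply Rmax_right; lra. Qed.

Lemma relu_div y a : 0 < a -> relu (y / a) = relu y / a.
Proof.
  intros Ha; assert (0 < / a) by (apply Rinv_0_lt_compat; auto); unfold Rdiv.
  destruct (Rle_dec 0 y); [rewrite !relu_id|rewrite !relu_neg]; nra.
Qed.

Lemma relu_sub_opp y : relu y - relu (- y) = y.
Proof. destruct (Rle_dec 0 y); [rewrite relu_id, relu_neg|rewrite relu_neg, relu_id]; lra. Qed.

Lemma relu_add_opp y : relu y + relu (- y) = Rabs y.
Proof.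
  unfold Rabs; destruct (Rcase_abs y); [rewrite relu_neg, relu_id|rewrite relu_id, relu_neg]; lra.
Qed.

Lemma relu_relu y : relu (relu y) = relu y.
Proof. apply relu_id, relu_nonneg. Qed.

Lemma rmax_const1 n f : (1 <= n)%nat -> (forall j, (j < n)%nat -> f j = 1) -> rmax n f = 1.
Proof.
  induction n as [|n IH]; intros Hn H; [lia|]; simpl; rewrite H by lia.
  destruct n as [|n]; [apply Rmax_right; simpl; lra|].
  rewrite IH by (try lia; intros; apply H; lia); apply Rmax_left; lra.
Qed.

Lemma affnorm_unit_columns p q a b V : (1 <= b)%nat ->
  (forall j, (j < b)%nat -> rsum (S a) (fun i => ppow (Rabs (V i j)) p) = 1) ->
  affnorm p q a b V = wid_root b q.
Proof.
  intros Hb H; unfold affnorm, mnorm, wid_root; destruct q as [q'|].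
  - rewrite (rsum_ext b _ (fun _ => 1)), rsum_const, Rmult_1_r.
    + apply ppow_Rpower, lt_0_INR; lia.
    + intros j Hj; rewrite H by auto; apply ppow_1.
  - apply rmax_const1; auto; intros j Hj; unfold colnorm; rewrite H by auto; apply ppow_1.
Qed.

Lemma affnorm_single_output p q a V : 1 <= p -> q_ok q ->
  affnorm p q a 1 V = ppow (rsum (S a) (fun i => ppow (Rabs (V i 0%nat)) p)) (1 / p).
Proof.
  intros Hp Hq; unfold affnorm, mnorm; destruct q as [q'|]; simpl in Hq.
  - simpl rsum; rewrite Rplus_0_l, ppow_ppow; f_equal; field; lra.
  - simpl rmax; apply Rmax_right, ppow_nonneg.
Qed.

Lemma NN_ext k d p q c co f f' : (forall x j, f x j = f' x j) ->
  NN k d p q c co f' -> NN k d p q c co f.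
Proof.
  intros E [Ts [Hhid [Hout Hf]]]; exists Ts; split; [|split]; auto.
  intros x j Hj; rewrite E; auto.
Qed.

(** * Padding a column to unit [l^p]-norm *)

Definition pad_column (p : R) (n z : nat) (V : nat -> nat -> R) (row col : nat) : R :=
  if (row =? z)%nat then ppow (1 - rsum n (fun i => ppow (Rabs (V i col)) p)) (1 / p)
  else V row col.

Lemma pad_column_pow_sum p n z V col : 1 <= p -> (z < n)%nat -> V z col = 0 ->
  rsum n (fun i => Rabs (V i col)) <= 1 ->
  rsum n (fun i => ppow (Rabs (pad_column p n z V i col)) p) = 1.
Proof.
  intros Hp Hz Hv0 Hl1.
  pose proof (lp_sum_le_1 n (fun i => V i col) p Hp Hl1) as Hle.
  rewrite (rsum_update n z _ (fun i => ppow (Rabs (V i col)) p))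
    by (auto; intros; unfold pad_column; case_nat; reflexivity).
  unfold pad_column; case_nat; rewrite Hv0, Rabs_R0, ppow_0, Rabs_ppow, ppow_root; lra.
Qed.

Lemma affine_pad_column p a z V h col : (z < a)%nat -> h z = 0 ->
  affine a (pad_column p (S a) (S z) V) h col = affine a V h col.
Proof.
  intros Hz Hh; unfold affine; f_equal.
  rewrite (rsum_update a z _ (fun i => V (S i) col * h i))
    by (auto; intros; unfold pad_column; case_nat; reflexivity).
  rewrite Hh; lra.
Qed.

(** * The network *)

Inductive node := Neuron (j : nat) | PosPart (l : nat) | NegPart (l : nat) | Zero | AccPos | AccNeg.

Section Network.

Variables (m1 G : nat) (p : R) (c b : nat -> R) (w : nat -> nat -> R).

Definition width : nat := G + 2 * m1 + 3.
Definition zero_row : nat := G + 2 * m1.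

Definition node_of (i : nat) : node :=
  if (i <? G)%nat then Neuron i
  else if (i <? G + m1)%nat then PosPart (i - G)
  else if (i <? G + 2 * m1)%nat then NegPart (i - G - m1)
  else if (i =? zero_row)%nat then Zero
  else if (i =? S zero_row)%nat then AccPos
  else AccNeg.

Definition node_valid (nd : node) : Prop :=
  match nd with Neuron j => (j < G)%nat | PosPart l | NegPart l => (l < m1)%nat | _ => True end.

Lemma node_of_valid i : node_valid (node_of i).
Proof. unfold node_of, node_valid; case_nat; exact I. Qed.

Lemma node_of_zero_row : node_of zero_row = Zero.
Proof. unfold node_of, zero_row; case_nat; reflexivity. Qed.

Definition node_sum (F : node -> R) : R :=
  rsum G (fun j => F (Neuron j)) + rsum m1 (fun l => F (PosPart l))
  + rsum m1 (fun l => F (NegPart l)) + F Zero + F AccPos + F AccNeg.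

Lemma rsum_node_of F : rsum width (fun i => F (node_of i)) = node_sum F.
Proof.
  unfold width, node_sum; replace (G + 2 * m1 + 3)%nat with (G + (m1 + (m1 + 3)))%nat by lia.
  rewrite !rsum_split.
  rewrite (rsum_ext G _ (fun j => F (Neuron j))) by (intros; unfold node_of; case_nat; reflexivity).
  rewrite (rsum_ext m1 _ (fun l => F (PosPart l)))
    by (intros; unfold node_of; case_nat; do 2 f_equal; lia).
  rewrite (rsum_ext m1 (fun i => F (node_of (G + (m1 + i)))) (fun l => F (NegPart l)))
    by (intros; unfold node_of; case_nat; do 2 f_equal; lia).
  simpl; unfold node_of, zero_row; case_nat; lra.
Qed.

Definition node_matrix (bias : node -> R) (wt : node -> node -> R) (row col : nat) : R :=
  match row with O => bias (node_of col) | S i => wt (node_of i) (node_of col) end.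

Lemma affine_node_matrix bias wt h v col : (forall i, (i < width)%nat -> h i = v (node_of i)) ->
  affine width (node_matrix bias wt) h col
  = bias (node_of col) + node_sum (fun src => wt src (node_of col) * v src).
Proof.
  intros Hh; unfold affine; rewrite <- rsum_node_of; f_equal.
  apply rsum_ext; intros i Hi; rewrite Hh; auto.
Qed.

Lemma rsum_node_matrix_col (F : R -> R) bias wt col :
  rsum (S width) (fun row => F (node_matrix bias wt row col))
  = F (bias (node_of col)) + node_sum (fun src => F (wt src (node_of col))).
Proof. rewrite rsum_shift, <- rsum_node_of; reflexivity. Qed.

Definition neuron (i : nat) (x : nat -> R) : R := rsum m1 (fun l => w i l * x l) + b i.

Definition params (i l : nat) : R := match l with O => b i | S l' => w i l' end.

Definition pnorm (i : nat) : R := ppow (rsum (S m1) (fun l => ppow (Rabs (params i l)) p)) (1 / p).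

(* Neurons of the first group are computed from [x] and normalised by their [l^p]-norm; the later
   ones are recomputed from [relu x] and [relu (- x)] with all weights halved. *)
Definition scale (i : nat) : R := if (i <? G)%nat then pnorm i else 2.

Definition cpos (i : nat) : R := relu (c i).
Definition cneg (i : nat) : R := relu (- c i).

Lemma cpos_nonneg i : 0 <= cpos i.
Proof. apply relu_nonneg. Qed.

Lemma cneg_nonneg i : 0 <= cneg i.
Proof. apply relu_nonneg. Qed.

Definition partial_out (a : nat -> R) (n : nat) (x : nat -> R) : R :=
  rsum (n * G) (fun i => a i * relu (neuron i x)).

Definition partial_mass (a : nat -> R) (n : nat) : R := rsum (n * G) (fun i => a i * scale i).

Definition average (a : nat -> R) (n : nat) (x : nat -> R) : R :=
  partial_out a n x / partial_mass a n.

(* The value of each node after hidden layer [s + 1]. *)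
Definition activation (s : nat) (x : nat -> R) (nd : node) : R :=
  match nd with
  | Neuron j => relu (neuron (s * G + j) x) / scale (s * G + j)
  | PosPart l => relu (x l)
  | NegPart l => relu (- x l)
  | Zero => 0
  | AccPos => average cpos s x
  | AccNeg => average cneg s x
  end.

Hypothesis Hp : 1 <= p.
Hypothesis params_l1 : forall i, Rabs (b i) + rsum m1 (fun l => Rabs (w i l)) = 1.

Lemma rsum_params_l1 i : rsum (S m1) (fun l => Rabs (params i l)) = 1.
Proof. rewrite rsum_shift; apply params_l1. Qed.

Lemma rsum_params_pow_pos i : 0 < rsum (S m1) (fun l => ppow (Rabs (params i l)) p).
Proof. apply lp_sum_pos; rewrite rsum_params_l1; lra. Qed.

Lemma pnorm_pos i : 0 < pnorm i.
Proof. apply ppow_gt0, rsum_params_pow_pos. Qed.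

Lemma pnorm_le_1 i : pnorm i <= 1.
Proof.
  unfold pnorm; rewrite <- (ppow_1 (1 / p)) at 2; apply ppow_le.
  - left; apply Rdiv_lt_0_compat; lra.
  - split; [left; apply rsum_params_pow_pos|apply lp_sum_le_1; auto; rewrite rsum_params_l1; lra].
Qed.

Lemma ppow_pnorm i : ppow (pnorm i) p = rsum (S m1) (fun l => ppow (Rabs (params i l)) p).
Proof. apply ppow_root; [left; apply rsum_params_pow_pos|lra]. Qed.

Lemma scale_pos i : 0 < scale i.
Proof. unfold scale; case_nat; [apply pnorm_pos|lra]. Qed.

Lemma scale_le_2 i : scale i <= 2.
Proof. unfold scale; case_nat; [pose proof (pnorm_le_1 i)|]; lra. Qed.

Lemma scale_late i : (G <= i)%nat -> scale i = 2.
Proof. intros; unfold scale; case_nat; reflexivity. Qed.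

Lemma rsum_mul_succ n f : rsum (S n * G) f = rsum (n * G) f + rsum G (fun j => f (n * G + j)%nat).
Proof. rewrite Nat.mul_succ_l; apply rsum_split. Qed.

Lemma partial_out_succ a n x : partial_out a (S n) x
  = partial_out a n x + rsum G (fun j => a (n * G + j)%nat * relu (neuron (n * G + j) x)).
Proof. apply rsum_mul_succ. Qed.

Lemma partial_mass_succ a n : partial_mass a (S n)
  = partial_mass a n + rsum G (fun j => a (n * G + j)%nat * scale (n * G + j)).
Proof. apply rsum_mul_succ. Qed.

Lemma average_0 a x : average a 0 x = 0.
Proof. unfold average, partial_out; simpl; unfold Rdiv; apply Rmult_0_l. Qed.

Lemma partial_out_split n x : partial_out c n x = partial_out cpos n x - partial_out cneg n x.
Proof.
  unfold partial_out; rewrite <- rsum_minus; apply rsum_ext; intros i _.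
  rewrite <- (relu_sub_opp (c i)) at 1; unfold cpos, cneg; ring.
Qed.

Lemma partial_mass_abs n :
  partial_mass (fun i => Rabs (c i)) n = partial_mass cpos n + partial_mass cneg n.
Proof.
  unfold partial_mass; rewrite <- rsum_plus; apply rsum_ext; intros i _.
  rewrite <- relu_add_opp; unfold cpos, cneg; ring.
Qed.

Lemma partial_mass_le n : partial_mass (fun i => Rabs (c i)) n <= 2 * rsum (n * G) (fun i => Rabs (c i)).
Proof.
  unfold partial_mass; rewrite <- rsum_scal; apply rsum_le; intros i _.
  pose proof (scale_le_2 i); pose proof (Rabs_pos (c i)); nra.
Qed.

(** * Accumulators *)

Section Accumulator.

Variable a : nat -> R.
Hypothesis a_nonneg : forall i, 0 <= a i.

Lemma partial_mass_nonneg n : 0 <= partial_mass a n.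
Proof. apply rsum_nonneg; intros; pose proof (scale_pos i); pose proof (a_nonneg i); nra. Qed.

Lemma partial_out_nonneg n x : 0 <= partial_out a n x.
Proof. apply rsum_nonneg; intros; apply Rmult_le_pos; [apply a_nonneg|apply relu_nonneg]. Qed.

(* If no mass has been seen, no coefficient is nonzero, so the junk value [0 / 0] is harmless. *)
Lemma partial_mass_mul_average n x : partial_mass a n * average a n x = partial_out a n x.
Proof.
  unfold average; destruct (Req_EM_T (partial_mass a n) 0) as [E|E]; [|field; auto].
  rewrite E, Rmult_0_l; symmetry; apply rsum_eq0; intros i Hi.
  assert (Hai : a i * scale i = 0).
  { apply (rsum_eq0_term (n * G) (fun i => a i * scale i)); auto.
    intros; pose proof (scale_pos i0); pose proof (a_nonneg i0); nra. }
  destruct (Rmult_integral _ _ Hai) as [->|Hs]; [ring|pose proof (scale_pos i); lra].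
Qed.

Definition feed (s j : nat) : R := a (s * G + j) * scale (s * G + j) / partial_mass a (S s).
Definition carry (s : nat) : R := partial_mass a s / partial_mass a (S s).

Lemma accumulator_step s x :
  relu (rsum G (fun j => feed s j * activation s x (Neuron j)) + carry s * average a s x)
  = average a (S s) x.
Proof.
  set (new := rsum G (fun j => a (s * G + j) * relu (neuron (s * G + j) x))).
  assert (Hnew : rsum G (fun j => feed s j * activation s x (Neuron j)) = new / partial_mass a (S s)).
  { unfold new, Rdiv; rewrite Rmult_comm, <- rsum_scal; apply rsum_ext; intros j _.
    unfold feed, Rdiv; simpl activation; pose proof (scale_pos (s * G + j)).
    transitivity (/ partial_mass a (S s) * (a (s * G + j) * relu (neuron (s * G + j) x))
                  * (scale (s * G + j) * / scale (s * G + j))); [unfold Rdiv; ring|].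
    rewrite Rinv_r; lra. }
  assert (Hcarry : carry s * average a s x = partial_out a s x / partial_mass a (S s)).
  { unfold carry; rewrite <- (partial_mass_mul_average s x); unfold Rdiv; ring. }
  rewrite Hnew, Hcarry; unfold average; rewrite relu_id.
  - rewrite partial_out_succ; unfold new, Rdiv; ring.
  - apply Rplus_le_le_0_compat; apply Rdiv_nonneg; auto using partial_mass_nonneg, partial_out_nonneg.
    apply rsum_nonneg; intros; apply Rmult_le_pos; auto using relu_nonneg.
Qed.

Lemma accumulator_l1 s : rsum G (fun j => Rabs (feed s j)) + Rabs (carry s) <= 1.
Proof.
  assert (Hfeed : rsum G (fun j => Rabs (feed s j))
                  = rsum G (fun j => a (s * G + j) * scale (s * G + j)) / partial_mass a (S s)).
  { unfold Rdiv; rewrite Rmult_comm, <- rsum_scal; apply rsum_ext; intros j _.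
    pose proof (scale_pos (s * G + j)); pose proof (a_nonneg (s * G + j)).
    unfold feed; rewrite Rabs_right; [unfold Rdiv; ring|].
    apply Rle_ge, Rdiv_nonneg; [nra|apply partial_mass_nonneg]. }
  unfold carry; rewrite Hfeed, Rabs_right by (apply Rle_ge, Rdiv_nonneg; apply partial_mass_nonneg).
  transitivity ((partial_mass a s + rsum G (fun j => a (s * G + j) * scale (s * G + j)))
                / partial_mass a (S s)); [right; unfold Rdiv; ring|].
  rewrite <- partial_mass_succ; apply Rdiv_diag_le_1.
Qed.

End Accumulator.

Definition first_column (nd : node) (row : nat) : R :=
  match nd, row with
  | Neuron j, _ => params j row / pnorm j
  | PosPart l, S l' => delta l' l
  | NegPart l, S l' => - delta l' l
  | (PosPart _ | NegPart _), O => 0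
  | _, O => -1
  | _, S _ => 0
  end.

Definition first_layer (row col : nat) : R := first_column (node_of col) row.

Lemma first_layer_value x nd : node_valid nd ->
  relu (first_column nd 0 + rsum m1 (fun l => first_column nd (S l) * x l)) = activation 0 x nd.
Proof.
  destruct nd as [j|l|l| | |]; cbn [first_column params activation node_valid]; intros Hv.
  - rewrite (rsum_ext m1 _ (fun l => / pnorm j * (w j l * x l))) by (intros; unfold Rdiv; ring).
    rewrite rsum_scal; simpl; unfold scale; case_nat.
    pose proof (pnorm_pos j); rewrite <- relu_div by auto; unfold neuron; f_equal; field; lra.
  - rewrite rsum_delta by auto; f_equal; ring.
  - rewrite (rsum_ext m1 _ (fun l' => delta l' l * - x l')) by (intros; ring).
    rewrite rsum_delta by auto; f_equal; ring.
  - rewrite rsum_0_mul; apply relu_neg; lra.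
  - rewrite rsum_0_mul, average_0; apply relu_neg; lra.
  - rewrite rsum_0_mul, average_0; apply relu_neg; lra.
Qed.

Lemma first_column_pow_sum nd : node_valid nd ->
  rsum (S m1) (fun row => ppow (Rabs (first_column nd row)) p) = 1.
Proof.
  destruct nd as [j|l|l| | |]; intros Hv; cbn [node_valid] in Hv;
    [|rewrite rsum_shift; cbn [first_column] ..].
  - cbn [first_column]; pose proof (pnorm_pos j).
    rewrite rsum_pow_div, ppow_pnorm by auto; apply Rinv_r.
    pose proof (rsum_params_pow_pos j); lra.
  - rewrite (rsum_ext m1 _ (fun l' => delta l' l)) by (intros; apply ppow_delta).
    rewrite rsum_delta_1, Rabs_R0, ppow_0 by auto; lra.
  - rewrite (rsum_ext m1 _ (fun l' => delta l' l)) by (intros; rewrite Rabs_Ropp; apply ppow_delta).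
    rewrite rsum_delta_1, Rabs_R0, ppow_0 by auto; lra.
  - rewrite (rsum_ext m1 _ (fun _ => 0)), rsum_0, Rabs_m1, ppow_1
      by (intros; rewrite Rabs_R0; apply ppow_0); lra.
  - rewrite (rsum_ext m1 _ (fun _ => 0)), rsum_0, Rabs_m1, ppow_1
      by (intros; rewrite Rabs_R0; apply ppow_0); lra.
  - rewrite (rsum_ext m1 _ (fun _ => 0)), rsum_0, Rabs_m1, ppow_1
      by (intros; rewrite Rabs_R0; apply ppow_0); lra.
Qed.

Definition mid_bias (s : nat) (nd : node) : R :=
  match nd with Neuron j => b (S s * G + j) / 2 | Zero => -1 | _ => 0 end.

Definition mid_weight (s : nat) (src nd : node) : R :=
  match nd, src with
  | Neuron j, PosPart l => w (S s * G + j) l / 2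
  | Neuron j, NegPart l => - (w (S s * G + j) l / 2)
  | PosPart l, PosPart l' | NegPart l, NegPart l' => delta l' l
  | AccPos, Neuron j => feed cpos s j
  | AccPos, AccPos => carry cpos s
  | AccNeg, Neuron j => feed cneg s j
  | AccNeg, AccNeg => carry cneg s
  | _, _ => 0
  end.

Definition mid_layer (s : nat) : nat -> nat -> R := node_matrix (mid_bias s) (mid_weight s).

Lemma relu_parts_mul a y : a / 2 * relu y + - (a / 2) * relu (- y) = / 2 * (a * y).
Proof.
  transitivity (/ 2 * (a * (relu y - relu (- y)))); [unfold Rdiv; ring|].
  rewrite relu_sub_opp; reflexivity.
Qed.

Lemma mid_value s x nd : node_valid nd ->
  relu (mid_bias s nd + node_sum (fun src => mid_weight s src nd * activation s x src))
  = activation (S s) x nd.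
Proof.
  unfold node_sum; destruct nd as [j|l|l| | |]; cbn [mid_weight mid_bias node_valid]; intros Hv.
  - cbn [activation]; rewrite rsum_0_mul, Rplus_0_l, <- rsum_plus.
    rewrite (rsum_ext m1 _ (fun l => / 2 * (w (S s * G + j) l * x l))) by (intros; apply relu_parts_mul).
    rewrite rsum_scal, scale_late by nia; rewrite <- relu_div by lra.
    unfold neuron; f_equal; field.
  - cbn [activation]; rewrite !rsum_0_mul, rsum_delta by auto.
    transitivity (relu (relu (x l))); [f_equal; ring|apply relu_relu].
  - cbn [activation]; rewrite !rsum_0_mul, rsum_delta by auto.
    transitivity (relu (relu (- x l))); [f_equal; ring|apply relu_relu].
  - rewrite !rsum_0_mul; apply relu_neg; lra.
  - cbn [activation]; rewrite !rsum_0_mul, <- (accumulator_step cpos cpos_nonneg s x).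
    f_equal; cbn [activation]; ring.
  - cbn [activation]; rewrite !rsum_0_mul, <- (accumulator_step cneg cneg_nonneg s x).
    f_equal; cbn [activation]; ring.
Qed.

Lemma mid_l1 s nd : node_valid nd ->
  Rabs (mid_bias s nd) + node_sum (fun src => Rabs (mid_weight s src nd)) <= 1.
Proof.
  unfold node_sum; destruct nd as [j|l|l| | |]; cbn [mid_weight mid_bias node_valid]; intros Hv;
    rewrite ?Rabs_R0, ?rsum_0.
  - set (i := (S s * G + j)%nat).
    rewrite (rsum_ext m1 _ (fun l => / 2 * Rabs (w i l)))
      by (intros; rewrite Rabs_div_pos by lra; unfold Rdiv; ring).
    rewrite (rsum_ext m1 (fun l => Rabs (- (w i l / 2))) (fun l => / 2 * Rabs (w i l)))
      by (intros; rewrite Rabs_Ropp, Rabs_div_pos by lra; unfold Rdiv; ring).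
    rewrite rsum_scal, Rabs_div_pos by lra.
    pose proof (params_l1 i); pose proof (Rabs_pos (b i)); lra.
  - rewrite (rsum_ext m1 _ (fun l' => delta l' l)) by (intros; apply Rabs_delta).
    rewrite rsum_delta_1 by auto; lra.
  - rewrite (rsum_ext m1 _ (fun l' => delta l' l)) by (intros; apply Rabs_delta).
    rewrite rsum_delta_1 by auto; lra.
  - rewrite Rabs_m1; lra.
  - pose proof (accumulator_l1 cpos cpos_nonneg s); lra.
  - pose proof (accumulator_l1 cneg cneg_nonneg s); lra.
Qed.

Definition out_weight (s : nat) (src : node) : R :=
  match src with
  | Neuron j => c (s * G + j) * scale (s * G + j)
  | AccPos => partial_mass cpos s
  | AccNeg => - partial_mass cneg s
  | _ => 0
  end.

Definition output_layer (s : nat) : nat -> nat -> R :=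
  node_matrix (fun _ => 0) (fun src _ => out_weight s src).

Lemma output_value s x :
  node_sum (fun src => out_weight s src * activation s x src) = partial_out c (S s) x.
Proof.
  unfold node_sum; cbn [out_weight activation]; rewrite !rsum_0_mul.
  rewrite (rsum_ext G _ (fun j => c (s * G + j) * relu (neuron (s * G + j) x))).
  2:{ intros j _; pose proof (scale_pos (s * G + j)); field; lra. }
  rewrite Ropp_mult_distr_l_reverse, !partial_mass_mul_average by auto using cpos_nonneg, cneg_nonneg.
  rewrite partial_out_succ, partial_out_split; ring.
Qed.

Lemma output_l1 s :
  node_sum (fun src => Rabs (out_weight s src)) = partial_mass (fun i => Rabs (c i)) (S s).
Proof.
  unfold node_sum; cbn [out_weight]; rewrite Rabs_R0, !rsum_0, Rabs_Ropp.
  rewrite (rsum_ext G _ (fun j => Rabs (c (s * G + j)) * scale (s * G + j))).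
  2:{ intros j _; rewrite Rabs_mult, (Rabs_right (scale _)); [reflexivity|].
      apply Rle_ge, Rlt_le, scale_pos. }
  rewrite !Rabs_right by (apply Rle_ge, partial_mass_nonneg; auto using cpos_nonneg, cneg_nonneg).
  rewrite partial_mass_succ, partial_mass_abs; ring.
Qed.

Definition layers (k t : nat) : nat -> nat -> R :=
  if (t =? 1)%nat then first_layer
  else if (t =? S k)%nat then output_layer (k - 1)
  else pad_column p (S width) (S zero_row) (mid_layer (t - 2)).

Lemma dk_hidden k i : (1 <= i <= k)%nat -> dk k m1 width i = width.
Proof. intros; unfold dk; case_nat; reflexivity. Qed.

Lemma dk_output k : dk k m1 width (S k) = 1%nat.
Proof. unfold dk; case_nat; reflexivity. Qed.

Lemma hidden_succ d T i x j : hidden d T (S i) x j = relu (affine (d i) (T (S i)) (hidden d T i x) j).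
Proof. reflexivity. Qed.

Lemma hidden_activation k n x j : (n < k)%nat -> (j < width)%nat ->
  hidden (dk k m1 width) (layers k) (S n) x j = activation n x (node_of j).
Proof.
  revert j; induction n as [|n IH]; intros j Hn Hj; rewrite hidden_succ; unfold layers at 1; case_nat.
  - exact (first_layer_value x (node_of j) (node_of_valid j)).
  - assert (Hzero : hidden (dk k m1 width) (layers k) (S n) x zero_row = 0)
      by (rewrite IH, node_of_zero_row by (unfold zero_row, width; lia); reflexivity).
    rewrite dk_hidden, affine_pad_column by (auto; unfold zero_row, width; lia).
    unfold mid_layer; rewrite (affine_node_matrix _ _ _ (activation n x)) by (intros; apply IH; lia).
    replace (S (S n) - 2)%nat with n by lia; apply mid_value, node_of_valid.
Qed.

Lemma layers_norm k q i : (1 <= i <= k)%nat ->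
  affnorm p q (dk k m1 width (i - 1)) (dk k m1 width i) (layers k i) = wid_root width q.
Proof.
  intros Hi; rewrite (dk_hidden k i Hi).
  apply affnorm_unit_columns; [unfold width; lia|]; intros col Hcol; unfold layers; case_nat.
  - subst i; exact (first_column_pow_sum (node_of col) (node_of_valid col)).
  - rewrite (dk_hidden k (i - 1)) by lia.
    apply pad_column_pow_sum; [auto|unfold zero_row, width; lia| |].
    + unfold mid_layer, node_matrix; rewrite node_of_zero_row; destruct (node_of col); reflexivity.
    + unfold mid_layer; rewrite (rsum_node_matrix_col Rabs); apply mid_l1, node_of_valid.
Qed.

Lemma output_norm k q co : (1 <= k)%nat -> q_ok q -> 0 < co ->
  rsum (k * G) (fun i => Rabs (c i)) <= co ->
  affnorm p q (dk k m1 width k) (dk k m1 width (S k)) (layers k (S k)) <= 2 * co.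
Proof.
  intros Hk Hq Hco Hc; rewrite dk_hidden, dk_output, affnorm_single_output by (auto; lia).
  apply lp_norm_le_l1; [auto|lra|]; unfold layers; case_nat; unfold output_layer.
  rewrite (rsum_node_matrix_col Rabs), Rabs_R0, Rplus_0_l, output_l1.
  replace (S (k - 1)) with k by lia; pose proof (partial_mass_le k); lra.
Qed.

Lemma realize_layers k x : (1 <= k)%nat -> realize k (dk k m1 width) (layers k) x 0 = partial_out c k x.
Proof.
  intros Hk; destruct k as [|n]; [lia|]; unfold realize; rewrite dk_hidden by lia.
  unfold layers at 1; case_nat; unfold output_layer; rewrite Nat.sub_succ, Nat.sub_0_r.
  rewrite (affine_node_matrix _ _ _ (activation n x)) by (intros; apply hidden_activation; lia).
  rewrite Rplus_0_l; apply output_value.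
Qed.

Theorem relu_sum_network k q co : (1 <= k)%nat -> q_ok q -> 0 < co ->
  rsum (k * G) (fun i => Rabs (c i)) <= co ->
  NN k (dk k m1 width) p q (wid_root width q) (2 * co)
    (fun x _ => rsum (k * G) (fun i => c i * relu (neuron i x))).
Proof.
  intros Hk Hq Hco Hc; exists (layers k); split; [|split].
  - intros; apply layers_norm; auto.
  - apply output_norm; auto.
  - intros x j Hj; rewrite dk_output in Hj; replace j with 0%nat by lia.
    rewrite realize_layers by auto; reflexivity.
Qed.

End Network.

(* Pad to [k * ceil(r / k)] neurons with the dead neurons [relu (-1)] and zero output weights. *)
Theorem lemma1 (m1 r : nat) (p : R) (q : extR) (co : R)
  (c b : nat -> R) (w : nat -> nat -> R) :
  (1 <= m1)%nat -> (1 <= r)%nat ->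
  1 <= p -> q_ok q -> 0 < co ->
  rsum r (fun i => Rabs (c i)) <= co ->
  (forall i, (i < r)%nat -> Rabs (b i) + rsum m1 (fun l => Rabs (w i l)) = 1) ->
  forall k : nat, (1 <= k <= r)%nat ->
    NN k (dk k m1 (wid r k m1)) p q (wid_root (wid r k m1) q) (2 * co)
      (fun x _ => rsum r (fun i =>
          c i * relu (rsum m1 (fun l => w i l * x l) + b i))).
Proof.
  intros Hm1 Hr Hp Hq Hco Hc Hunit k Hk.
  set (G := ((r + k - 1) / k)%nat).
  assert (HG : (r <= k * G)%nat).
  { pose proof (Nat.div_mod_eq (r + k - 1) k); pose proof (Nat.mod_upper_bound (r + k - 1) k); lia. }
  set (c' := fun i => if (i <? r)%nat then c i else 0).
  set (b' := fun i => if (i <? r)%nat then b i else -1).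
  set (w' := fun i l => if (i <? r)%nat then w i l else 0).
  assert (Hunit' : forall i, Rabs (b' i) + rsum m1 (fun l => Rabs (w' i l)) = 1).
  { intros i; unfold b', w'; destruct (Nat.ltb_spec i r); [auto|].
    rewrite Rabs_m1, (rsum_ext m1 _ (fun _ => 0)), rsum_0 by (intros; apply Rabs_R0); lra. }
  assert (Hc' : rsum (k * G) (fun i => Rabs (c' i)) <= co).
  { rewrite <- (rsum_pad_zero (k * G) r) in Hc by auto.
    eapply Rle_trans, Hc; right; apply rsum_ext; intros i _; unfold c'; case_nat;
      [reflexivity|apply Rabs_R0]. }
  eapply NN_ext; [|exact (relu_sum_network m1 G p c' b' w' Hp Hunit' k q co ltac:(lia) Hq Hco Hc')].
  intros x j; cbv beta; rewrite <- (rsum_pad_zero (k * G) r) by auto.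
  apply rsum_ext; intros i _; unfold neuron, c', b', w'; destruct (i <? r); ring.
Qed.
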